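(* Let $R$ be a left hereditary ring, $M$ a projective left $R$-module and $N$ a submodule of $M$. Then $\beta(N)\subseteq\langle E_N(0)\rangle\subseteq\beta_{co}(N)$, where $N$ is regarded as an $R$-module.
   Context: Rings are associative with identity; modules are unital left modules. $R$ is left hereditary if every submodule of a projective left $R$-module is projective. For a module $X$: a submodule $P$ is prime if $RX\not\subseteq P$ and for every ideal $A$ of $R$ and submodule $K$ with $AK\subseteq P$, $K\subseteq P$ or $AX\subseteq P$; completely prime if $RX\not\subseteq P$ and $rx\in P$ implies $x\in P$ or $rX\subseteq P$. $\beta(X)$ (resp. $\beta_{co}(X)$) is the intersection of all prime (resp. completely prime) submodules of $X$ ($=X$ if none). $E_X(0)=\{rx: r\in R, x\in X, r^kx=0\text{ for some }k\in\mathbb N\}$, $\langle E_X(0)\rangle$ the submodule generated. *)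

From mathcomp Require Import all_boot all_algebra.
Set Implicit Arguments. Unset Strict Implicit. Unset Printing Implicit Defensive.
Import GRing.Theory.
Local Open Scope ring_scope.

Section Defs.
Variable R : pzRingType.

Definition is_ideal (A : R -> Prop) : Prop :=
  [/\ A 0, (forall a b, A a -> A b -> A (a + b)), (forall a, A a -> A (- a)),
      (forall r a, A a -> A (r * a)) & (forall r a, A a -> A (a * r))].

Variable M : lmodType R.

Definition is_submodule (Q : M -> Prop) : Prop :=
  [/\ Q 0, (forall x y, Q x -> Q y -> Q (x + y)) & (forall (r : R) x, Q x -> Q (r *: x))].

Definition psub (P Q : M -> Prop) : Prop := forall x, P x -> Q x.

Definition gen_submodule (S : M -> Prop) : M -> Prop :=
  fun x => forall Q, is_submodule Q -> psub S Q -> Q x.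

(* Maps out of N are represented by functions on M that are R-linear on N. *)
Definition linear_on (N : M -> Prop) (B : lmodType R) (f : M -> B) : Prop :=
  forall (r : R) x y, N x -> N y -> f (r *: x + y) = r *: f x + f y.

Definition projective_sub (N : M -> Prop) : Prop :=
  forall (A B : lmodType R) (g : {linear A -> B}),
    (forall b : B, exists a : A, g a = b) ->
    forall f : M -> B, linear_on N f ->
    exists h : M -> A, linear_on N h /\ forall x, N x -> g (h x) = f x.

Definition projective_module : Prop := projective_sub (fun _ => True).

Definition prime_sub (N P : M -> Prop) : Prop :=
  [/\ is_submodule P, psub P N,
      (* RN is not contained in P *)
      (exists (r : R) x, N x /\ ~ P (r *: x)) &
      forall (A : R -> Prop) (K : M -> Prop), is_ideal A -> is_submodule K -> psub K N ->
        (forall a k, A a -> K k -> P (a *: k)) ->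
        psub K P \/ (forall a x, A a -> N x -> P (a *: x))].

Definition completely_prime_sub (N P : M -> Prop) : Prop :=
  [/\ is_submodule P, psub P N,
      (exists (r : R) x, N x /\ ~ P (r *: x)) &
      forall (r : R) x, N x -> P (r *: x) -> P x \/ (forall y, N y -> P (r *: y))].

(* beta(N): intersection of all prime submodules of N (= N if there are none) *)
Definition beta (N : M -> Prop) : M -> Prop :=
  fun x => N x /\ forall P, prime_sub N P -> P x.

Definition beta_co (N : M -> Prop) : M -> Prop :=
  fun x => N x /\ forall P, completely_prime_sub N P -> P x.

Definition E0 (N : M -> Prop) : M -> Prop :=
  fun y => exists (r : R) x (k : nat), [/\ N x, r ^+ k *: x = 0 & y = r *: x].

End Defs.

Definition left_hereditary (R : pzRingType) : Prop :=
  forall (V : lmodType R), projective_module V ->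
    forall Q : V -> Prop, is_submodule Q -> projective_sub Q.

(* Since R is left hereditary, N is projective, so the identity of N lifts
   along the free module on N: every x in N is a combination sum_k c_k v_k
   with v_k in N and coefficients c_k depending R-linearly on x.  If all c_k
   are nilpotent, each c_k v_k lies in E_N(0).  Otherwise some c_k is not
   nilpotent, Zorn's lemma gives a prime ideal Q of R avoiding its powers,
   and the elements of N whose coefficients all lie in Q form a prime
   submodule missing x.  Conversely, if r^k x = 0 then r^k x lies in every
   completely prime P, and complete primeness strips the powers of r one at
   a time down to r x in P. *)

From HB Require Import structures.
From mathcomp Require Import all_boot all_algebra finmap.
From mathcomp.multinomials Require Import monalg.
From mathcomp Require Import boolp classical_sets.

Set Implicit Arguments.
Unset Strict Implicit.
Unset Printing Implicit Defensive.

Import GRing.Theory.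
Local Open Scope ring_scope.
Local Open Scope classical_set_scope.

Section FreeModule.
Variables (K : choiceType) (R : pzRingType).

Definition free_lmod := {malg R[K]}.
HB.instance Definition _ := GRing.Zmodule.on free_lmod.

Definition free_scale (c : R) (g : free_lmod) : free_lmod :=
  [malg k in msupp g => c * g@_k].

Lemma free_scaleE c g k : (free_scale c g)@_k = c * g@_k.
Proof. by rewrite mcoeffE; case: msuppP; rewrite ?mulr0. Qed.

Lemma free_scaleA c1 c2 g : free_scale c1 (free_scale c2 g) = free_scale (c1 * c2) g.
Proof. by apply/malgP => k; rewrite !free_scaleE mulrA. Qed.

Lemma free_scale1 g : free_scale 1 g = g.
Proof. by apply/malgP => k; rewrite free_scaleE mul1r. Qed.

Lemma free_scaleDr c g1 g2 :
  free_scale c (g1 + g2) = free_scale c g1 + free_scale c g2.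
Proof. by apply/malgP => k; rewrite !(mcoeffD, free_scaleE) mulrDr. Qed.

Lemma free_scaleDl g c1 c2 :
  free_scale (c1 + c2) g = free_scale c1 g + free_scale c2 g.
Proof. by apply/malgP => k; rewrite !(mcoeffD, free_scaleE) mulrDl. Qed.

HB.instance Definition _ := GRing.Zmodule_isLmodule.Build R free_lmod
  free_scaleA free_scale1 free_scaleDr free_scaleDl.

Lemma free_coeffZ c (g : free_lmod) k : (c *: g)@_k = c * g@_k.
Proof. exact: free_scaleE. Qed.

End FreeModule.

Section LinearExtension.
Variables (K : choiceType) (R : pzRingType) (V : lmodType R) (v : K -> V).

Definition lin_ext (a : free_lmod K R) : V := \sum_(k <- msupp a) a@_k *: v k.

Lemma lin_ext_fset_incl (s : {fset K}) a :
  (msupp a `<=` s)%fset -> lin_ext a = \sum_(k <- s) a@_k *: v k.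
Proof.
move=> supp_s; apply: big_fset_incl => // k _ /mcoeff_outdom ->.
exact: scale0r.
Qed.

Lemma lin_ext_is_linear : linear lin_ext.
Proof.
move=> c a b; set s := (msupp a `|` msupp b)%fset.
have supp_s : (msupp (c *: a + b) `<=` s)%fset.
  apply/fsubsetP => k; rewrite -mcoeff_neq0 mcoeffD free_coeffZ in_fsetU.
  by rewrite -!mcoeff_neq0; case: (a@_k =P 0) => [->|//]; rewrite mulr0 add0r.
rewrite (lin_ext_fset_incl supp_s) (@lin_ext_fset_incl s a) ?fsubsetUl //.
rewrite (@lin_ext_fset_incl s b) ?fsubsetUr // scaler_sumr -big_split.
by apply: eq_bigr => k _; rewrite mcoeffD free_coeffZ scalerDl scalerA.
Qed.

HB.instance Definition _ :=
  GRing.isLinear.Build R (free_lmod K R) V *:%R lin_ext lin_ext_is_linear.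

Lemma lin_extU k : lin_ext << k >> = v k.
Proof. by rewrite (lin_ext_fset_incl msuppU_le) big_seq_fset1 mcoeffUU scale1r. Qed.

Lemma lin_ext_surj : (forall y, exists k, v k = y) -> forall y, exists a, lin_ext a = y.
Proof. by move=> v_surj y; have [k <-] := v_surj y; exists << k >>; rewrite lin_extU. Qed.

End LinearExtension.

Lemma linear_lin_ext (K : choiceType) (R : pzRingType) (V W : lmodType R)
    (f : {linear V -> W}) (v : K -> V) (w : K -> W) a :
  (forall k, f (v k) = w k) -> f (lin_ext v a) = lin_ext w a.
Proof. by move=> fvw; rewrite linear_sum; apply: eq_bigr => k _; rewrite linearZ fvw. Qed.

Section LinearOn.
Variables (R : pzRingType) (M B : lmodType R) (N : M -> Prop) (f : M -> B).
Hypotheses (N0 : N 0) (f_lin : linear_on N f).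

Lemma linear_on0 : f 0 = 0.
Proof.
have := f_lin 1 N0 N0; rewrite !scale1r addr0 => f0.
by apply: (@addrI _ (f 0)); rewrite addr0 -f0.
Qed.

Lemma linear_onD x y : N x -> N y -> f (x + y) = f x + f y.
Proof. by move=> Nx Ny; rewrite -[x in LHS]scale1r f_lin // scale1r. Qed.

Lemma linear_onZ r x : N x -> f (r *: x) = r *: f x.
Proof. by move=> Nx; rewrite -[r *: x]addr0 f_lin // linear_on0 addr0. Qed.

End LinearOn.

Section SubmoduleType.
Variables (R : pzRingType) (M : lmodType R) (N : M -> Prop).

Definition sub_or0 (x : M) : M := if `[< N x >] then x else 0.

Lemma sub_or0_in x : N 0 -> N (sub_or0 x).
Proof. by rewrite /sub_or0; case: asboolP. Qed.

Lemma sub_or0_id x : N x -> sub_or0 x = x.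
Proof. by rewrite /sub_or0; case: asboolP. Qed.

(* The dummy argument makes the canonical submodule structure on this
   predicate depend on the closure proof. *)
Definition submod_pred of is_submodule N : pred M := fun x => `[< N x >].

Variable HN : is_submodule N.

Lemma submod_pred_closed : subsemimod_closed (submod_pred HN).
Proof.
case: HN => N0 ND NZ; split; first split.
- exact/asboolP.
- by move=> x y /asboolP Nx /asboolP Ny; apply/asboolP; apply: ND.
- by move=> r x /asboolP Nx; apply/asboolP; apply: NZ.
Qed.

HB.instance Definition _ :=
  GRing.isSubmodClosed.Build R M (submod_pred HN) submod_pred_closed.

Definition submod_type := {x : M | submod_pred HN x}.
HB.instance Definition _ := [isSub of submod_type for @sval _ _].
HB.instance Definition _ := [Choice of submod_type by <:].
HB.instance Definition _ := [SubChoice_isSubLmodule of submod_type by <:].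

Lemma val_insubd0 x : val (insubd (0 : submod_type) x) = sub_or0 x.
Proof. by rewrite val_insubd. Qed.

End SubmoduleType.

Lemma projective_sub_split (R : pzRingType) (M : lmodType R) (N : M -> Prop) :
    is_submodule N -> projective_sub N ->
  exists h : M -> free_lmod M R,
    linear_on N h /\ forall x, N x -> lin_ext (sub_or0 N) (h x) = x.
Proof.
move=> HN projN; have [N0 ND NZ] := HN.
pose v x := insubd (0 : submod_type HN) x.
have v_surj : forall y, exists x, v x = y by move=> y; exists (val y); apply: valKd.
have v_lin : linear_on N v.
  move=> r x y Nx Ny; apply: val_inj.
  by rewrite linearP /= !val_insubd0 !sub_or0_id //; apply: ND => //; apply: NZ.
have [h [h_lin hv]] := projN _ _ (lin_ext v) (lin_ext_surj v_surj) v v_lin.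
exists h; split => // x Nx.
transitivity (val (lin_ext v (h x))).
  by symmetry; exact: (linear_lin_ext (f := val) _ (val_insubd0 HN)).
by rewrite hv // val_insubd0 sub_or0_id.
Qed.

Section PrimeIdeals.
Variable R : pzRingType.
Implicit Types (S X : set R) (x y : R).

Definition prime_ideal (Q : R -> Prop) :=
  [/\ is_ideal Q, ~ Q 1 & forall x y, (forall r, Q (x * r * y)) -> Q x \/ Q y].

Definition ideal_span S : set R := fun u => forall J, is_ideal J -> S `<=` J -> J u.

Lemma ideal_span_ideal S : is_ideal (ideal_span S).
Proof.
split.
- by move=> J [].
- by move=> u w Su Sw J iJ SJ; case: (iJ) => _ JD _ _ _; apply: JD; [apply: Su|apply: Sw].
- by move=> u Su J iJ SJ; case: (iJ) => _ _ JN _ _; apply: JN; apply: Su.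
- by move=> r u Su J iJ SJ; case: (iJ) => _ _ _ JL _; apply: JL; apply: Su.
- by move=> r u Su J iJ SJ; case: (iJ) => _ _ _ _ JR; apply: JR; apply: Su.
Qed.

Lemma ideal_span_mul A x y : is_ideal A -> (forall r, A (x * r * y)) ->
  forall u w, ideal_span (A `|` [set x]) u -> ideal_span (A `|` [set y]) w -> A (u * w).
Proof.
move=> [A0 AD AN AL AR] xRy.
have xR_span : forall w, ideal_span (A `|` [set y]) w -> forall r, A (x * r * w).
  move=> w /(_ (fun w => forall r, A (x * r * w))); apply; last first.
    by move=> s [As|->] r; [apply: AL|apply: xRy].
  split.
  - by move=> r; rewrite mulr0.
  - by move=> w1 w2 h1 h2 r; rewrite mulrDr; apply: AD.
  - by move=> w1 h1 r; rewrite mulrN; apply: AN.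
  - by move=> s w1 h1 r; rewrite mulrA -(mulrA x); apply: h1.
  - by move=> s w1 h1 r; rewrite mulrA; apply: AR.
have [_ _ _ span_mulr _] := ideal_span_ideal (A `|` [set y]).
move=> u w Su; move: w; apply: (Su (fun u => forall w, _ -> A (u * w))).
  split.
  - by move=> w _; rewrite mul0r.
  - by move=> u1 u2 h1 h2 w Sw; rewrite mulrDl; apply: AD; [apply: h1|apply: h2].
  - by move=> u1 h1 w Sw; rewrite mulNr; apply: AN; apply: h1.
  - by move=> r u1 h1 w Sw; rewrite -mulrA; apply: AL; apply: h1.
  - by move=> r u1 h1 w Sw; rewrite -mulrA; apply: h1; apply: span_mulr.
move=> s [As|->] w Sw; first exact: AR.
by rewrite -[x]mulr1; apply: xR_span.
Qed.

(* No [X 0] here: Zorn's lemma must also bound the empty chain, whose union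
   is empty. *)
Definition ideal_closed X := [/\ forall u w, X u -> X w -> X (u + w),
  forall u, X u -> X (- u), forall r u, X u -> X (r * u) & forall r u, X u -> X (u * r)].

Lemma bigcup_chain_ideal_closed (F : set (set R)) :
  F `<=` ideal_closed -> total_on F subset -> ideal_closed (\bigcup_(X in F) X).
Proof.
move=> F_closed F_chain.
have common X Y u w : F X -> F Y -> X u -> Y w -> exists2 Z, F Z & Z u /\ Z w.
  move=> FX FY Xu Yw; case: (F_chain X Y FX FY) => [XY|YX].
  - by exists Y => //; split => //; apply: XY.
  - by exists X => //; split => //; apply: YX.
split.
- move=> u w [X FX Xu] [Y FY Yw]; have [Z FZ [Zu Zw]] := common X Y u w FX FY Xu Yw.
  by exists Z => //; have [ZD _ _ _] := F_closed Z FZ; apply: ZD.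
- by move=> u [X FX Xu]; exists X => //; have [_ XN _ _] := F_closed X FX; apply: XN.
- by move=> r u [X FX Xu]; exists X => //; have [_ _ XL _] := F_closed X FX; apply: XL.
- by move=> r u [X FX Xu]; exists X => //; have [_ _ _ XR] := F_closed X FX; apply: XR.
Qed.

Variable a : R.

Definition avoids_powers X := forall n, ~ X (a ^+ n).

Section MaximalAvoiding.
Hypothesis a_not_nilpotent : forall n, a ^+ n != 0.
Variable A : set R.
Hypotheses (A_closed : ideal_closed A) (A_avoids : avoids_powers A).
Hypothesis A_max :
  forall B, ideal_closed B -> avoids_powers B -> A `<=` B -> B `<=` A.

Lemma maximal_avoiding_ideal : is_ideal A.
Proof.
have [AD AN AL AR] := A_closed; split => //.
have A0_avoids : avoids_powers (A `|` [set 0]).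
  by move=> n [/A_avoids //|an0]; have := a_not_nilpotent n; rewrite an0 eqxx.
apply: (A_max (B := A `|` [set 0])); [|done|by move=> u; left|by right].
split.
- by move=> u w [Au|->] [Aw|->]; rewrite ?addr0 ?add0r; [left; apply: AD|left|left|right].
- by move=> u [Au|->]; rewrite ?oppr0; [left; apply: AN|right].
- by move=> r u [Au|->]; rewrite ?mulr0; [left; apply: AL|right].
- by move=> r u [Au|->]; rewrite ?mul0r; [left; apply: AR|right].
Qed.

Lemma maximal_avoiding_prime : prime_ideal A.
Proof.
have A_ideal := maximal_avoiding_ideal.
have span_hits x : ~ A x -> exists n, ideal_span (A `|` [set x]) (a ^+ n).
  move=> nAx; apply: contrapT => no_hit; apply: nAx.
  have [_ sD sN sL sR] := ideal_span_ideal (A `|` [set x]).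
  apply: (A_max (B := ideal_span (A `|` [set x]))) => //.
  - by move=> n span_an; apply: no_hit; exists n.
  - by move=> u Au J _; apply; left.
  - by move=> J _; apply; right.
split => //; first by rewrite -(expr0 a); apply: A_avoids.
move=> x y xRy; apply: contrapT => /not_orP [nAx nAy].
have [n span_x] := span_hits x nAx; have [m span_y] := span_hits y nAy.
by apply: (@A_avoids (n + m)); rewrite exprD; apply: ideal_span_mul span_x span_y.
Qed.

End MaximalAvoiding.

Lemma exists_prime_ideal_avoiding : (forall n, a ^+ n != 0) ->
  exists Q, prime_ideal Q /\ ~ Q a.
Proof.
move=> a_not_nilpotent.
have [A [[A_closed A_avoids] A_max]] :
    exists A, (ideal_closed A /\ avoids_powers A) /\
      forall B, A `<` B -> ~ (ideal_closed B /\ avoids_powers B).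
  apply: Zorn_bigcup => F F_sub F_chain; split.
    by apply: bigcup_chain_ideal_closed => // X /F_sub [].
  by move=> n [X /F_sub [_ X_avoids]]; apply: X_avoids.
exists A; split.
  apply: maximal_avoiding_prime => // B B_closed B_avoids AB.
  by apply: contrapT => BA; apply: (A_max B) => //; split.
by move=> Aa; apply: (A_avoids 1); rewrite expr1.
Qed.

End PrimeIdeals.

Section CoeffPreimage.
Variables (R : pzRingType) (M : lmodType R) (K : choiceType).
Variables (N : M -> Prop) (h : M -> free_lmod K R) (Q : R -> Prop).
Hypotheses (HN : is_submodule N) (h_lin : linear_on N h) (Q_prime : prime_ideal Q).

Let h_coeffD y z k : N y -> N z -> (h (y + z))@_k = (h y)@_k + (h z)@_k.
Proof. by move=> Ny Nz; rewrite (linear_onD h_lin) // (mcoeffD k). Qed.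

Let h_coeffZ r y k : N y -> (h (r *: y))@_k = r * (h y)@_k.
Proof. by case: HN => N0 _ _ Ny; rewrite (linear_onZ N0 h_lin) // (free_coeffZ r (h y)). Qed.

Definition coeff_preimage : M -> Prop := fun y => N y /\ forall k, Q (h y)@_k.

Lemma coeff_preimage_submodule : is_submodule coeff_preimage.
Proof.
have [N0 ND NZ] := HN; have [[Q0 QD _ QL _] _ _] := Q_prime.
split.
- by split => // k; rewrite (linear_on0 N0 h_lin) mcoeff0.
- move=> y z [Ny Qy] [Nz Qz]; split; first exact: ND.
  by move=> k; rewrite h_coeffD //; apply: QD.
- move=> r y [Ny Qy]; split; first exact: NZ.
  by move=> k; rewrite h_coeffZ //; apply: QL.
Qed.

Lemma coeff_preimage_prime x k : N x -> ~ Q (h x)@_k -> prime_sub N coeff_preimage.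
Proof.
move=> Nx Qhx; have [_ _ NZ] := HN; have [[_ _ _ _ QR] _ Q_mul] := Q_prime.
split; first exact: coeff_preimage_submodule.
- by move=> y [].
- by exists 1, x; split => //; rewrite scale1r => -[_ /(_ k)].
move=> A L [_ _ _ _ AR] _ LN AL_sub.
have [|L_not_sub] := pselect (psub L coeff_preimage); [by left|right].
have /existsNP [l /not_implyP [Ll l_notin]] := L_not_sub.
have [m Qhl] : exists m, ~ Q (h l)@_m.
  by apply/existsNP => Qhl; apply: l_notin; split => //; apply: LN.
move=> c y Ac Ny; have Qc : Q c.
  suff /Q_mul [//|/Qhl//] : forall r, Q (c * r * (h l)@_m).
  move=> r; have [_ /(_ m)] := AL_sub (c * r) l (AR r c Ac) Ll.
  by rewrite h_coeffZ //; apply: LN.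
split; first exact: NZ.
by move=> k'; rewrite h_coeffZ //; apply: QR.
Qed.

End CoeffPreimage.

Section GeneratedByNilpotents.
Variables (R : pzRingType) (M : lmodType R) (N : M -> Prop).
Hypothesis HN : is_submodule N.

Lemma lin_ext_nilpotent_gen_E0 (a : free_lmod M R) :
  (forall k, exists n, a@_k ^+ n = 0) -> gen_submodule (E0 N) (lin_ext (sub_or0 N) a).
Proof.
have [N0 _ _] := HN.
move=> a_nil S [S0 SD SZ] E0S; apply: big_ind => // k _.
have [n an0] := a_nil k; apply: E0S; exists a@_k, (sub_or0 N k), n.
by split => //; [apply: sub_or0_in | rewrite an0 scale0r].
Qed.

Lemma beta_sub_gen_E0 : projective_sub N -> psub (beta N) (gen_submodule (E0 N)).
Proof.
move=> projN x [Nx x_in_primes].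
have [h [h_lin h_split]] := projective_sub_split HN projN.
have [a_nil|] := pselect (forall k, exists n, (h x)@_k ^+ n = 0).
  by rewrite -(h_split x Nx); apply: lin_ext_nilpotent_gen_E0.
move=> /existsNP [k /forallNP hxk_not_nil].
have [Q [Q_prime Q_hxk]] : exists Q, prime_ideal Q /\ ~ Q (h x)@_k.
  by apply: exists_prime_ideal_avoiding => n; apply/eqP/hxk_not_nil.
by have [_ /(_ k)] := x_in_primes _ (coeff_preimage_prime HN h_lin Q_prime Nx Q_hxk).
Qed.

Lemma completely_prime_pow P r x j : completely_prime_sub N P -> N x ->
  P (r ^+ j.+1 *: x) -> P (r *: x).
Proof.
have [_ _ NZ] := HN; move=> [_ _ _ P_cp] Nx; elim: j => [|j IHj]; first by rewrite expr1.
by rewrite exprS -scalerA => /(P_cp r _ (NZ _ _ Nx)) [/IHj|/(_ x Nx)].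
Qed.

Lemma gen_E0_sub_beta_co : psub (gen_submodule (E0 N)) (beta_co N).
Proof.
have [_ _ NZ] := HN.
move=> y y_gen; split.
  by apply: y_gen => // _ [r [x [k [Nx _ ->]]]]; apply: NZ.
move=> P P_cp; have [[P0 _ _] _ _ _] := P_cp; apply: y_gen; first by case: P_cp.
move=> _ [r [x [[|j] [Nx rx0 ->]]]].
  by move: rx0; rewrite expr0 scale1r => ->; rewrite scaler0.
by apply: (completely_prime_pow P_cp Nx (j := j)); rewrite rx0.
Qed.

End GeneratedByNilpotents.

Unset Implicit Arguments.

Theorem lemma4p20 (R : pzRingType) (M : lmodType R) (N : M -> Prop) :
  left_hereditary R -> projective_module M -> is_submodule N ->
  psub (beta N) (gen_submodule (E0 N)) /\
  psub (gen_submodule (E0 N)) (beta_co N).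
Proof.
move=> hereditary projM HN; split; last exact: gen_E0_sub_beta_co.
exact: beta_sub_gen_E0 (hereditary M projM N HN).
Qed.
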